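(* Let $n\ge1$ and $P=[2]\times[n]$. The statistic $I\mapsto|\mathrm{Max}(I)|-|\mathrm{Min}(I)|$ (number of maximal elements of $I$ minus number of minimal elements of $I$) is $0$-mesic under rowmotion on $\mathcal{IC}(P)$.
   Context: $[n]$ is the chain $1<\cdots<n$; $[2]\times[n]$ has the componentwise order. All posets are finite. A subset $I\subseteq P$ is interval-closed if for all $x,y\in I$ and $z\in P$ with $x\le z\le y$ we have $z\in I$; $\mathcal{IC}(P)$ is the set of interval-closed subsets of $P$. For $x\in P$ the toggle $t_x:\mathcal{IC}(P)\to\mathcal{IC}(P)$ is defined by $t_x(I)=I\triangle\{x\}$ if $I\triangle\{x\}\in\mathcal{IC}(P)$ and $t_x(I)=I$ otherwise. Rowmotion is $\mathrm{Row}=t_{x_1}\circ t_{x_2}\circ\cdots\circ t_{x_N}$, where $(x_1,\dots,x_N)$ is a linear extension of $P$ (toggling from the top down). $\mathrm{Max}(I)$ and $\mathrm{Min}(I)$ are the sets of maximal and minimal elements of $I$ (empty if $I=\emptyset$). A statistic is $c$-mesic if its average over every rowmotion orbit equals $c$. *)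

From mathcomp Require Import all_boot all_order all_algebra.
Set Implicit Arguments. Unset Strict Implicit. Unset Printing Implicit Defensive.
Import GRing.Theory Num.Theory.

Section Generic.
Variables (T : finType) (le : rel T).

Definition interval_closed (I : {set T}) : bool :=
  [forall x in I, forall y in I, forall z, (le x z && le z y) ==> (z \in I)].

Definition toggle (x : T) (I : {set T}) : {set T} :=
  let J := (I :\: [set x]) :|: ([set x] :\: I) in
  if interval_closed J then J else I.

Definition linear_extension (L : seq T) : Prop :=
  uniq L /\ (forall x, x \in L) /\
  (forall x y, le x y -> index x L <= index y L).

(* Row = t_{x_1} o t_{x_2} o ... o t_{x_N}  (t_{x_N} applied first) *)
Definition rowmotion (L : seq T) (I : {set T}) : {set T} :=
  foldr toggle I L.

Definition Maxs (I : {set T}) : {set T} :=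
  [set x in I | [forall y in I, le x y ==> (y == x)]].
Definition Mins (I : {set T}) : {set T} :=
  [set x in I | [forall y in I, le y x ==> (y == x)]].

Definition mesic (f : {set T} -> {set T}) (dom : pred {set T})
    (stat : {set T} -> rat) (c : rat) : Prop :=
  forall I, dom I ->
    ((\sum_(J <- orbit f I) stat J) / (size (orbit f I))%:R = c)%R.
End Generic.

(* The product poset [2] x [n], elements (i, j) with i < 2, j < n
   (0-based), ordered componentwise. *)
Definition two_by_n (n : nat) : finType := ('I_2 * 'I_n)%type.
Definition le2n (n : nat) : rel (two_by_n n) :=
  fun x y => (x.1 <= y.1)%N && (x.2 <= y.2)%N.

Definition max_minus_min (T : finType) (le : rel T) (I : {set T}) : rat :=
  (#|Maxs le I|%:R - #|Mins le I|%:R)%R.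

From mathcomp Require Import all_boot all_order all_algebra.
From mathcomp Require Import zify lra.
Set Implicit Arguments. Unset Strict Implicit. Unset Printing Implicit Defensive.
Import GRing.Theory.

(* Split [2] x [n] into its bottom row (i = 0) and top row (i = 1).  Say the
   top row of I overhangs to the left if it has an element left of the
   bottom row while the rows overlap, and dually the bottom row overhangs to
   the right.  Each row contains at most one maximal and at most one minimal
   element of I, and comparing rows gives
     |Max I| + [top overhangs left in I] = |Min I| + [bottom overhangs right in I].
   Following the toggles one element at a time shows that the bottom row of
   I overhangs to the right iff the top row of Row I overhangs to the left:
   with a the first column of the bottom row and b the last column of the
   top row, Row I contains (1,a), (0,a+1), (1,b+1) but not (0,a).  The
   converse comes from the half-turn of the rectangle, which conjugates
   rowmotion into its inverse.  So the statistic is h(Row I) - h(I) with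
   h = [top overhangs left], and it telescopes to 0 along every orbit. *)

Section Rowmotion.
Variables (T : finType) (le : rel T).
Local Notation IC := (interval_closed le).
Local Notation tog := (toggle le).

Lemma interval_closedP (S : {set T}) :
  reflect (forall x y z, x \in S -> y \in S -> le x z -> le z y -> z \in S) (IC S).
Proof.
apply: (iffP forallP) => [icS x y z xS yS lxz lzy|icS x].
  have /implyP/(_ xS)/forallP/(_ y)/implyP/(_ yS)/forallP/(_ z)/implyP := icS x.
  by apply; rewrite lxz.
apply/implyP => xS; apply/forallP => y; apply/implyP => yS; apply/forallP => z.
by apply/implyP => /andP[lxz lzy]; apply: icS lxz lzy.
Qed.

Lemma MaxsP (S : {set T}) x :
  reflect (x \in S /\ forall y, y \in S -> le x y -> y = x) (x \in Maxs le S).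
Proof.
rewrite inE; apply: (iffP andP) => -[xS x_max]; split=> //.
  by move=> y yS lxy; apply/eqP; move/forallP/(_ y): x_max; rewrite yS lxy.
by apply/forallP => y; apply/implyP => yS; apply/implyP => /(x_max _ yS)/eqP.
Qed.

Lemma MinsP (S : {set T}) x :
  reflect (x \in S /\ forall y, y \in S -> le y x -> y = x) (x \in Mins le S).
Proof.
rewrite inE; apply: (iffP andP) => -[xS x_min]; split=> //.
  by move=> y yS lyx; apply/eqP; move/forallP/(_ y): x_min; rewrite yS lyx.
by apply/forallP => y; apply/implyP => yS; apply/implyP => /(x_min _ yS)/eqP.
Qed.

Definition symdiff1 (x : T) (S : {set T}) : {set T} := (S :\: [set x]) :|: ([set x] :\: S).

Lemma in_symdiff1 x S y : (y \in symdiff1 x S) = (if y == x then x \notin S else y \in S).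
Proof. by rewrite !inE; case: eqP => [->|_]; rewrite ?andbT ?andbF ?orbF. Qed.

Lemma symdiff1K x : involutive (symdiff1 x).
Proof.
move=> S; apply/setP => y; rewrite !in_symdiff1.
by case: eqP => [->|]; rewrite ?in_symdiff1 ?eqxx ?negbK.
Qed.

Lemma toggleE x S : tog x S = if IC (symdiff1 x S) then symdiff1 x S else S.
Proof. by []. Qed.

Lemma toggle_interval_closed x S : IC S -> IC (tog x S).
Proof. by rewrite toggleE; case: ifP. Qed.

Lemma foldr_toggle_interval_closed s S : IC S -> IC (foldr tog S s).
Proof. by elim: s => //= x s IHs /IHs; apply: toggle_interval_closed. Qed.

Lemma in_toggle_neq x S y : y != x -> (y \in tog x S) = (y \in S).
Proof.
by move=> yx; rewrite toggleE; case: ifP; rewrite ?in_symdiff1 ?(negbTE yx).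
Qed.

Lemma in_foldr_toggle_notin s S y : y \notin s -> (y \in foldr tog S s) = (y \in S).
Proof.
elim: s => //= x s IHs; rewrite inE negb_or => /andP[yx ys].
by rewrite in_toggle_neq // IHs.
Qed.

Lemma toggleK x S : IC S -> tog x (tog x S) = S.
Proof.
move=> icS; rewrite [tog x S]toggleE; case: ifP => icJ; last by rewrite toggleE icJ.
by rewrite toggleE symdiff1K icS.
Qed.

Lemma rowmotion_revK L S : IC S -> rowmotion le (rev L) (rowmotion le L S) = S.
Proof.
rewrite /rowmotion; elim: L S => // x L IHL S icS.
rewrite rev_cons -cats1 foldr_cat /= toggleK ?foldr_toggle_interval_closed //.
exact: IHL.
Qed.

Lemma in_toggle_in x S : IC S -> x \in S ->
  (x \in tog x S) =
  [exists a in S, exists b in S, [&& a != x, b != x, le a x & le x b]].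
Proof.
move=> icS xS; rewrite toggleE.
case: ifP => icJ; rewrite ?in_symdiff1 ?eqxx xS; apply/esym.
  apply/negbTE/existsP => -[a /andP[aS /existsP[b /andP[bS /and4P[ax bx lax lxb]]]]].
  have := interval_closedP _ icJ a b x.
  by rewrite !in_symdiff1 (negbTE ax) (negbTE bx) eqxx xS => /(_ aS bS lax lxb).
apply: contraFT icJ => /existsPn noab; apply/interval_closedP => a b z.
rewrite !in_symdiff1; case: (eqVneq a x) => [->|ax]; first by rewrite xS.
case: (eqVneq b x) => [->|bx]; first by rewrite xS.
move=> aS bS laz lzb; case: (eqVneq z x) => [zx|_]; last first.
  exact: interval_closedP icS _ _ _ aS bS laz lzb.
exfalso; move: (noab a); rewrite aS /= => /negP; apply; apply/existsP; exists b.
by rewrite bS ax bx -zx laz lzb.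
Qed.

(* When rowmotion reaches [x], the current set [S] still agrees with [I]
   below [x] and already agrees with the final set above [x]. *)
Lemma rowmotion_at L I x : linear_extension le L -> IC I ->
  exists2 S, IC S & [/\ (x \in rowmotion le L I) = (x \in tog x S),
    (x \in S) = (x \in I),
    forall y, y != x -> le y x -> (y \in S) = (y \in I) &
    forall y, y != x -> le x y -> (y \in rowmotion le L I) = (y \in S)].
Proof.
move=> [uL [allL idxL]] icI.
have [pre [suf eL]] : exists pre suf, L = pre ++ x :: suf.
  by case/splitPr: (allL x) => pre suf; exists pre, suf.
rewrite eL cat_uniq /= in uL; case/and4P: uL => _ /norP[xpre pre_suf] xsuf _.
have idx_x : index x L = size pre by rewrite eL index_cat (negbTE xpre) /= eqxx addn0.
exists (foldr tog I suf); first exact: foldr_toggle_interval_closed.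
have eR : rowmotion le L I = foldr tog (tog x (foldr tog I suf)) pre.
  by rewrite /rowmotion eL foldr_cat.
split.
- by rewrite eR in_foldr_toggle_notin.
- by rewrite in_foldr_toggle_notin.
- move=> y yx lyx; rewrite in_foldr_toggle_notin //; apply/negP => ysuf.
  have ypre : y \notin pre.
    by apply: contraNN pre_suf => ypre; apply/hasP; exists y; rewrite // inE ysuf orbT.
  have := idxL _ _ lyx; rewrite idx_x eL index_cat (negbTE ypre) /= eq_sym (negbTE yx).
  by rewrite addnS ltnNge leq_addr.
- move=> y yx lxy; rewrite eR in_foldr_toggle_notin ?in_toggle_neq //.
  apply/negP => ypre; have := idxL _ _ lxy.
  by rewrite idx_x eL index_cat ypre leqNgt index_mem ypre.
Qed.

Lemma in_rowmotion_in L I x : linear_extension le L -> IC I -> x \in I ->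
  (x \in rowmotion le L I) <->
  (exists a, [/\ a != x, le a x & a \in I]) /\
  (exists b, [/\ b != x, le x b & b \in rowmotion le L I]).
Proof.
move=> lL icI xI; have [S icS [-> xS below above]] := rowmotion_at x lL icI.
rewrite in_toggle_in ?xS //; split.
- case/existsP=> a /andP[aS /existsP[b /andP[bS /and4P[ax bx lax lxb]]]].
  by split; [exists a; rewrite -below | exists b; rewrite above].
- case=> -[a [ax lax aI]] [b [bx lxb bR]]; apply/existsP; exists a.
  rewrite below // aI; apply/existsP; exists b.
  by rewrite -above // bR ax bx lax lxb.
Qed.

Section PartialOrder.
Hypothesis le_anti : forall u v, le u v -> le v u -> u = v.
Hypothesis le_trans : forall u v w, le u v -> le v w -> le u w.

Lemma in_toggle_out x S : IC S -> x \notin S ->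
  (x \in tog x S) <->
  (forall b z, b \in S -> le x b -> le x z -> le z b -> z != x -> z \in S) /\
  (forall a z, a \in S -> le a x -> le a z -> le z x -> z != x -> z \in S).
Proof.
move=> icS xS; rewrite toggleE.
have xJ : x \in symdiff1 x S by rewrite in_symdiff1 eqxx xS.
have neq_x y : y \in S -> y != x by apply: contraTneq => ->.
have inJ y : y \in S -> y \in symdiff1 x S.
  by move=> yS; rewrite in_symdiff1 (negbTE (neq_x _ yS)).
case: ifP => icJ; rewrite ?xJ ?(negbTE xS); last first.
  split=> // -[above below]; exfalso; move/negbT/negP: icJ; apply.
  apply/interval_closedP => a b z; rewrite !in_symdiff1; case: (eqVneq z x) => [->//|zx].
  case: (eqVneq a x) => [->|ax]; case: (eqVneq b x) => [->|bx].
  - by move=> _ _ lxz lzx; rewrite (le_anti lxz lzx) eqxx in zx.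
  - by move=> _ bS lxz lzb; apply: above bS (le_trans lxz lzb) lxz lzb zx.
  - by move=> aS _ laz lzx; apply: below aS (le_trans laz lzx) laz lzx zx.
  - by move=> aS bS; apply: interval_closedP icS _ _ _ aS bS.
split=> // _; split.
- move=> b z bS lxb lxz lzb zx.
  have := interval_closedP _ icJ x b z xJ (inJ _ bS) lxz lzb.
  by rewrite in_symdiff1 (negbTE zx).
- move=> a z aS lax laz lzx zx.
  have := interval_closedP _ icJ a x z (inJ _ aS) xJ laz lzx.
  by rewrite in_symdiff1 (negbTE zx).
Qed.

Lemma in_rowmotion_out L I x : linear_extension le L -> IC I -> x \notin I ->
  (x \in rowmotion le L I) <->
  (forall b z, b \in rowmotion le L I -> le x b -> le x z -> le z b -> z != x ->
     z \in rowmotion le L I) /\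
  (forall a z, a \in I -> le a x -> le a z -> le z x -> z != x -> z \in I).
Proof.
move=> lL icI xI; have [S icS [-> xS below above]] := rowmotion_at x lL icI.
have neq_x y : y \in S -> y != x by apply: contraTneq => ->; rewrite xS.
rewrite in_toggle_out ?xS //; split=> -[up down]; split.
- move=> b z bR lxb lxz lzb zx; case: (eqVneq b x) => [bx|bx].
    by rewrite bx in lzb; rewrite (le_anti lzb lxz) eqxx in zx.
  by rewrite above //; apply: (up b); rewrite // -above.
- move=> a z aI lax laz lzx zx; have ax : a != x by apply: contraTneq aI => ->.
  by rewrite -below //; apply: (down a); rewrite // below.
- move=> b z bS lxb lxz lzb zx; have bx := neq_x _ bS.
  by rewrite -above //; apply: (up b); rewrite // above.
- move=> a z aS lax laz lzx zx; have ax := neq_x _ aS.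
  by rewrite below //; apply: (down a); rewrite // -below.
Qed.

End PartialOrder.
End Rowmotion.

Lemma index_rev (T : eqType) (s : seq T) x : uniq s -> x \in s ->
  index x (rev s) = size s - (index x s).+1.
Proof.
elim: s => //= y s IHs /andP[ys us]; rewrite inE rev_cons -cats1 index_cat mem_rev.
case: (eqVneq x y) => [->|xy] /=; first by rewrite (negbTE ys) eqxx addn0 size_rev subn1.
by move=> xs; rewrite xs IHs // (negbTE xy) subSS.
Qed.

Section Duality.
Variables (T : finType) (le : rel T) (phi : T -> T).
Hypothesis phiK : involutive phi.
Hypothesis le_phi : forall x y, le (phi x) (phi y) = le y x.
Local Notation IC := (interval_closed le).
Local Notation tog := (toggle le).

Lemma mem_imset_inv (S : {set T}) y : (y \in phi @: S) = (phi y \in S).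
Proof. by rewrite -{1}(phiK y) mem_imset //; apply: inv_inj. Qed.

Lemma imset_invK : involutive (fun S : {set T} => phi @: S).
Proof. by move=> S; apply/setP => y; rewrite !mem_imset_inv phiK. Qed.

Lemma interval_closed_imset (S : {set T}) : IC (phi @: S) = IC S.
Proof.
suff icS_phi S' : IC S' -> IC (phi @: S').
  by apply/idP/idP => [/icS_phi|/icS_phi //]; rewrite imset_invK.
move=> /interval_closedP icS; apply/interval_closedP => a b z.
rewrite !mem_imset_inv => aS bS laz lzb.
by apply: (icS _ _ _ bS aS); rewrite le_phi.
Qed.

Lemma toggle_imset x (S : {set T}) : tog (phi x) (phi @: S) = phi @: tog x S.
Proof.
have symdiff1_imset : symdiff1 (phi x) (phi @: S) = phi @: symdiff1 x S.
  apply/setP => y; rewrite mem_imset_inv !in_symdiff1 !mem_imset_inv phiK.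
  by rewrite -(inj_eq (inv_inj phiK)) phiK.
by rewrite !toggleE symdiff1_imset interval_closed_imset; case: ifP.
Qed.

Lemma rowmotion_imset L (S : {set T}) :
  rowmotion le (map phi L) (phi @: S) = phi @: rowmotion le L S.
Proof. by elim: L => //= x L IHL; rewrite -toggle_imset -IHL. Qed.

Lemma linear_extension_dual L :
  linear_extension le L -> linear_extension le (rev (map phi L)).
Proof.
case=> uL [allL idxL]; have phi_inj := inv_inj phiK.
have umL : uniq (map phi L) by rewrite map_inj_uniq.
have inL y : y \in map phi L by rewrite -(phiK y) map_f.
split; first by rewrite rev_uniq.
split=> [y|x y lxy]; first by rewrite mem_rev.
rewrite !index_rev // size_map -(phiK x) -(phiK y) !index_map //.
by apply: leq_sub2l; rewrite ltnS idxL // le_phi.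
Qed.

Lemma rowmotion_dual L I : IC I ->
  rowmotion le (rev (map phi L)) (phi @: rowmotion le L I) = phi @: I.
Proof.
by move=> icI; rewrite -rowmotion_imset rowmotion_revK ?interval_closed_imset.
Qed.
End Duality.

Section Telescope.
Variables (T : finType) (f : {set T} -> {set T}) (dom : pred {set T}).
Variables (stat : {set T} -> rat) (h : {set T} -> bool).
Hypothesis f_dom : forall I, dom I -> dom (f I).
Hypothesis f_inj : {in dom &, injective f}.
Hypothesis stat_diff : forall I, dom I -> stat I = ((h (f I))%:R - (h I)%:R)%R.

Lemma sum_traject_telescope k I :
  (\sum_(J <- traject f I k) ((h (f J))%:R - (h J)%:R)
     = (h (iter k f I))%:R - (h I)%:R :> rat)%R.
Proof.
elim: k I => [|k IHk] I /=; first by rewrite big_nil subrr.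
by rewrite big_cons IHk -iterSr addrC addrA subrK.
Qed.

Lemma mesic_telescope : mesic f dom stat 0%R.
Proof.
move=> I dI; have in_dom J : J \in orbit f I -> dom J.
  by case/trajectP => i _ ->; elim: i => //= i /f_dom.
have cycle_I : iter (order f I) f I = I.
  apply: (@orbitPcycle _ f I 5 4).1 => J J' /in_dom dJ /in_dom dJ'; exact: f_inj.
rewrite (eq_big_seq (fun J => ((h (f J))%:R - (h J)%:R)%R)); last first.
  by move=> J /in_dom /stat_diff.
by rewrite sum_traject_telescope cycle_I subrr mul0r.
Qed.
End Telescope.

Section TwoByN.
Variable n : nat.
Local Notation T := (two_by_n n.+1).
Local Notation le := (@le2n n.+1).
Local Notation IC := (interval_closed le).

(* Points are addressed by natural coordinates so that [lia] applies. *)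
Definition pt (i j : nat) : T := (inord i, inord j).

Lemma pt1 i j : i < 2 -> (pt i j).1 = i :> nat.
Proof. by move=> lt_i2; rewrite /= inordK. Qed.

Lemma pt2 i j : j <= n -> (pt i j).2 = j :> nat.
Proof. by move=> le_jn; rewrite /= inordK. Qed.

Variant pt_spec : T -> Prop :=
  | PtBottom j of j <= n : pt_spec (pt 0 j)
  | PtTop j of j <= n : pt_spec (pt 1 j).

Lemma ptP x : pt_spec x.
Proof.
case: x => i j; have -> : (i, j) = pt i j by rewrite /pt !inord_val.
have le_jn : j <= n by rewrite -ltnS ltn_ord.
by case: i => [[|[|//]] _] /=; constructor.
Qed.

Lemma le_pt i j i' j' : i < 2 -> i' < 2 -> j <= n -> j' <= n ->
  le (pt i j) (pt i' j') = (i <= i') && (j <= j').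
Proof. by move=> *; rewrite /le2n !pt1 ?pt2. Qed.

Lemma eq_pt i j i' j' : i < 2 -> i' < 2 -> j <= n -> j' <= n ->
  (pt i j == pt i' j') = (i == i') && (j == j').
Proof.
move=> lt_i2 lt_i'2 le_jn le_j'n; apply/eqP/andP => [e|[/eqP-> /eqP->]//].
split; apply/eqP; first by rewrite -(pt1 j lt_i2) -(pt1 j' lt_i'2) e.
by rewrite -(pt2 i le_jn) -(pt2 i' le_j'n) e.
Qed.

Lemma le2n_anti (x y : T) : le x y -> le y x -> x = y.
Proof.
case: x y => [i j] [i' j']; rewrite /le2n /= => /andP[le_ii' le_jj'] /andP[le_i'i le_j'j].
by congr pair; apply/val_inj/eqP; rewrite eqn_leq ?le_ii' ?le_jj'.
Qed.

Lemma le2n_trans (x y z : T) : le x y -> le y z -> le x z.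
Proof.
rewrite /le2n => /andP[le_x1 le_x2] /andP[le_y1 le_y2].
by rewrite (leq_trans le_x1 le_y1) (leq_trans le_x2 le_y2).
Qed.

Definition flip (x : T) : T := (rev_ord x.1, rev_ord x.2).

Lemma flipK : involutive flip.
Proof. by case=> i j; rewrite /flip /= !rev_ordK. Qed.

Lemma le_flip x y : le (flip x) (flip y) = le y x.
Proof.
case: x y => [i j] [i' j']; rewrite /le2n /flip /=.
have := ltn_ord i; have := ltn_ord j; have := ltn_ord i'; have := ltn_ord j'.
by move=> *; apply/andP/andP => -[? ?]; split; lia.
Qed.

Lemma flip_pt i j : i < 2 -> j <= n -> flip (pt i j) = pt (1 - i) (n - j).
Proof.
move=> lt_i2 le_jn; rewrite /pt /flip /=.
by congr pair; apply: val_inj; rewrite /= !inordK; lia.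
Qed.

Lemma interval_closed_pt (S : {set T}) i j i' j' i'' j'' : IC S ->
  pt i j \in S -> pt i' j' \in S -> i <= i'' <= i' -> i' < 2 -> j <= j'' <= j' -> j' <= n ->
  pt i'' j'' \in S.
Proof.
move=> /interval_closedP icS ijS ij'S /andP[le_i le_i'] lt_i'2 /andP[le_j le_j'] le_j'n.
by apply: (icS _ _ _ ijS ij'S); rewrite le_pt ?le_i ?le_i' ?le_j ?le_j' //; lia.
Qed.

Lemma exists_row_min (S : {set T}) i : (exists2 j, j <= n & pt i j \in S) ->
  exists a, [/\ a <= n, pt i a \in S & forall j, j <= n -> pt i j \in S -> a <= j].
Proof.
move=> ex; have /ex_minnP[a /andP[le_an aS] a_min] : exists j, (j <= n) && (pt i j \in S).
  by case: ex => j le_jn jS; exists j; rewrite le_jn.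
by exists a; split=> // j le_jn jS; apply: a_min; rewrite le_jn.
Qed.

Lemma exists_row_max (S : {set T}) i : (exists2 j, j <= n & pt i j \in S) ->
  exists b, [/\ b <= n, pt i b \in S & forall j, j <= n -> pt i j \in S -> j <= b].
Proof.
move=> ex; have exb : exists j, (j <= n) && (pt i j \in S).
  by case: ex => j le_jn jS; exists j; rewrite le_jn.
have ub j : (j <= n) && (pt i j \in S) -> j <= n by case/andP.
have [b /andP[le_bn bS] b_max] := ex_maxnP exb ub.
by exists b; split=> // j le_jn jS; apply: b_max; rewrite le_jn.
Qed.

Definition exists_col (P : nat -> bool) : bool := [exists j : 'I_n.+1, P j].

Lemma exists_colP (P : nat -> bool) : reflect (exists2 j, j <= n & P j) (exists_col P).
Proof.
apply: (iffP existsP) => [[j Pj]|[j le_jn Pj]]; first by exists j; rewrite // -ltnS.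
by exists (Ordinal (le_jn : j < n.+1)).
Qed.
Arguments exists_colP {P}.

Definition meets_row (i : nat) (S : {set T}) : bool := exists_col (fun j => pt i j \in S).

Definition rows_linked (S : {set T}) : bool :=
  exists_col (fun k => exists_col (fun l => [&& k <= l, pt 0 k \in S & pt 1 l \in S])).

Definition overhang_left (S : {set T}) : bool :=
  exists_col (fun j => exists_col (fun k => exists_col (fun l =>
    [&& j < k <= l, pt 1 j \in S, pt 0 k \in S, pt 1 l \in S & pt 0 j \notin S]))).

Definition overhang_right (S : {set T}) : bool :=
  exists_col (fun k => exists_col (fun l => exists_col (fun m =>
    [&& k <= l < m, pt 0 k \in S, pt 1 l \in S, pt 0 m \in S & pt 1 m \notin S]))).

Lemma meets_rowP i (S : {set T}) :
  reflect (exists2 j, j <= n & pt i j \in S) (meets_row i S).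
Proof. exact: exists_colP. Qed.

Lemma rows_linkedP (S : {set T}) :
  reflect (exists k l, [/\ k <= l, l <= n, pt 0 k \in S & pt 1 l \in S]) (rows_linked S).
Proof.
rewrite /rows_linked; apply: (iffP exists_colP).
  by case=> k _ /exists_colP[l le_ln /and3P[]]; exists k, l.
case=> k [l [le_kl le_ln kS lS]].
by exists k; [exact: leq_trans le_ln | apply/exists_colP; exists l; rewrite ?le_kl ?kS].
Qed.

Variant overhang_left_spec (S : {set T}) : Prop :=
  OverhangLeft j k l of j < k & k <= l & l <= n &
    pt 1 j \in S & pt 0 k \in S & pt 1 l \in S & pt 0 j \notin S.

Variant overhang_right_spec (S : {set T}) : Prop :=
  OverhangRight k l m of k <= l & l < m & m <= n &
    pt 0 k \in S & pt 1 l \in S & pt 0 m \in S & pt 1 m \notin S.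

Lemma overhang_leftP (S : {set T}) : reflect (overhang_left_spec S) (overhang_left S).
Proof.
rewrite /overhang_left; apply: (iffP exists_colP).
  case=> j _ /exists_colP[k _ /exists_colP[l le_ln]].
  by case/and5P=> /andP[lt_jk le_kl]; exists j k l.
case=> j k l lt_jk le_kl le_ln jS kS lS jNS; have le_kn := leq_trans le_kl le_ln.
exists j; first by lia.
apply/exists_colP; exists k => //; apply/exists_colP; exists l => //.
by rewrite lt_jk le_kl jS kS lS jNS.
Qed.

Lemma overhang_rightP (S : {set T}) : reflect (overhang_right_spec S) (overhang_right S).
Proof.
rewrite /overhang_right; apply: (iffP exists_colP).
  case=> k _ /exists_colP[l _ /exists_colP[m le_mn]].
  by case/and5P=> /andP[le_kl lt_lm]; exists k l m.
case=> k l m le_kl lt_lm le_mn kS lS mS mNS.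
exists k; first by lia.
apply/exists_colP; exists l; first by lia.
apply/exists_colP; exists m => //.
by rewrite le_kl lt_lm kS lS mS mNS.
Qed.

Section RowmotionOverhang.
Variables (L : seq T) (I : {set T}).
Hypotheses (lin_L : linear_extension le L) (icI : IC I).
Local Notation R := (rowmotion le L I).

Variables a b : nat.
Hypotheses (le_ab : a <= b) (lt_bn : b < n).
Hypotheses (aI : pt 0 a \in I) (a_min : forall j, j <= n -> pt 0 j \in I -> a <= j).
Hypotheses (bI : pt 1 b \in I) (b_max : forall j, j <= n -> pt 1 j \in I -> j <= b).
Hypothesis b1I : pt 0 b.+1 \in I.

Lemma notin_top_beyond j : b < j -> j <= n -> pt 1 j \notin I.
Proof. by move=> lt_bj le_jn; apply/negP => /(b_max le_jn); rewrite leqNgt lt_bj. Qed.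

Lemma notin_rowmotion_top_beyond j : b.+1 < j -> j <= n -> pt 1 j \notin R.
Proof.
move=> lt_b1j le_jn; apply/negP.
move/(in_rowmotion_out le2n_anti le2n_trans lin_L icI (notin_top_beyond _ _)).
case; [lia | done | move=> _ /(_ (pt 1 b) (pt 1 b.+1)) down].
have /negP[] := notin_top_beyond (ltnSn b) lt_bn.
by apply: down; rewrite ?le_pt ?eq_pt //; lia.
Qed.

Lemma in_rowmotion_top_next : pt 1 b.+1 \in R.
Proof.
apply/(in_rowmotion_out le2n_anti le2n_trans lin_L icI (notin_top_beyond (ltnSn b) lt_bn)).
split=> y z; case: (ptP y) => j le_jn; case: (ptP z) => j' le_j'n;
  rewrite !le_pt ?eq_pt //= => yS le_y le_z le_zy neq_z.
- by rewrite (negbTE (notin_rowmotion_top_beyond _ le_jn)) in yS; lia.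
- by apply: (interval_closed_pt icI yS b1I); lia.
all: by apply: (interval_closed_pt icI yS bI); lia.
Qed.

Lemma in_rowmotion_between x : x \in I ->
  pt 0 a != x -> le (pt 0 a) x -> pt 1 b.+1 != x -> le x (pt 1 b.+1) -> x \in R.
Proof.
move=> xI ax lax bx lxb; apply/(in_rowmotion_in lin_L icI xI).
by split; [exists (pt 0 a) | exists (pt 1 b.+1); split=> //; apply: in_rowmotion_top_next].
Qed.

Lemma in_rowmotion_bottom_next : pt 0 a.+1 \in R.
Proof.
apply: in_rowmotion_between; rewrite ?eq_pt ?le_pt //; try lia.
by apply: (interval_closed_pt icI aI b1I); lia.
Qed.

Lemma in_rowmotion_top_left : pt 1 a \in R.
Proof.
apply: in_rowmotion_between; rewrite ?eq_pt ?le_pt //; try lia.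
by apply: (interval_closed_pt icI aI bI); lia.
Qed.

Lemma notin_rowmotion_bottom_left : pt 0 a \notin R.
Proof.
have le_an : a <= n by lia.
apply/negP => /(in_rowmotion_in lin_L icI aI) [[y [ya]]].
case: (ptP y) ya => j le_jn; rewrite eq_pt ?le_pt //= => ya le_ja yI _.
by have := a_min le_jn yI; lia.
Qed.

Lemma overhang_left_rowmotion : overhang_left R.
Proof.
apply/overhang_leftP; apply: (@OverhangLeft _ a a.+1 b.+1) => //.
- exact: in_rowmotion_top_left.
- exact: in_rowmotion_bottom_next.
- exact: in_rowmotion_top_next.
- exact: notin_rowmotion_bottom_left.
Qed.
End RowmotionOverhang.

Lemma overhang_right_rowmotion L I : linear_extension le L -> IC I ->
  overhang_right I -> overhang_left (rowmotion le L I).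
Proof.
move=> lin_L icI /overhang_rightP[k l m le_kl lt_lm le_mn kI lI mI mNI].
have [le_kn le_ln] : k <= n /\ l <= n by lia.
have [a [_ aI a_min]] := exists_row_min (ex_intro2 _ _ k le_kn kI).
have [b [le_bn bI b_max]] := exists_row_max (ex_intro2 _ _ l le_ln lI).
have le_ak : a <= k by apply: a_min => //; lia.
have le_lb : l <= b by apply: b_max => //; lia.
have lt_bm : b < m.
  rewrite ltnNge; apply: contraNN mNI => le_mb.
  by apply: (interval_closed_pt icI lI bI); lia.
apply: (overhang_left_rowmotion lin_L icI (a := a) (b := b)) => //; try lia.
by apply: (interval_closed_pt icI kI mI); lia.
Qed.

Lemma overhang_left_flip (S : {set T}) : overhang_left S -> overhang_right (flip @: S).
Proof.
case/overhang_leftP=> j k l lt_jk le_kl le_ln jS kS lS jNS.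
have [le_kn le_jn] : k <= n /\ j <= n by lia.
apply/overhang_rightP; apply: (@OverhangRight _ (n - l) (n - k) (n - j)); try lia.
all: by rewrite (mem_imset_inv flipK) flip_pt ?leq_subr // subKn.
Qed.

Lemma overhang_left_rowmotionE L I : linear_extension le L -> IC I ->
  overhang_left (rowmotion le L I) = overhang_right I.
Proof.
move=> lin_L icI; apply/idP/idP => [ovR|]; last exact: overhang_right_rowmotion.
have icR : IC (flip @: rowmotion le L I).
  by rewrite (interval_closed_imset flipK le_flip) foldr_toggle_interval_closed.
have := overhang_right_rowmotion (linear_extension_dual flipK le_flip lin_L) icR.
rewrite (rowmotion_dual flipK le_flip) // => /(_ (overhang_left_flip ovR)).
by move/overhang_left_flip; rewrite (imset_invK flipK).
Qed.

Lemma card_rows (A : {set T}) : {in A &, forall x y, x.1 = y.1 -> x = y} ->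
  #|A| = meets_row 0 A + meets_row 1 A.
Proof.
move=> A_rows; pose row i := [set x in A | x.1 == i :> nat].
have card_row i : i < 2 -> #|row i| = meets_row i A.
  move=> lt_i2; have : #|row i| <= 1.
    apply/card_le1_eqP => x y; rewrite /row !inE => /andP[xA /eqP x1] /andP[yA /eqP y1].
    by apply: A_rows => //; apply: val_inj; rewrite /= x1 y1.
  have -> : meets_row i A = (0 < #|row i|).
    apply/meets_rowP/card_gt0P => [[j le_jn jA]|[x]].
      by exists (pt i j); rewrite /row !inE jA pt1 ?eqxx.
    by case: (ptP x) => j le_jn; rewrite /row !inE pt1 // => /andP[jA /eqP <-]; exists j.
  by case: #|row i| => [|[]].
rewrite -(card_row 0) // -(card_row 1) // -(cardsID [set x : T | x.1 == 0 :> nat] A).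
congr (_ + _); apply: eq_card => x; rewrite !inE // andbC.
by have := ltn_ord x.1; case: (nat_of_ord x.1) => [|[|]].
Qed.

Lemma meets_row_sub i (A B : {set T}) : A \subset B -> meets_row i A -> meets_row i B.
Proof. by move/subsetP=> sAB /meets_rowP[j le_jn /sAB jB]; apply/meets_rowP; exists j. Qed.

Lemma overhang_left_linked (S : {set T}) : overhang_left S -> rows_linked S.
Proof.
by case/overhang_leftP=> j k l _ le_kl le_ln _ kS lS _; apply/rows_linkedP; exists k, l.
Qed.

Lemma overhang_right_linked (S : {set T}) : overhang_right S -> rows_linked S.
Proof.
case/overhang_rightP=> k l m le_kl lt_lm le_mn kS lS _ _; apply/rows_linkedP.
by exists k, l; split=> //; lia.
Qed.

Lemma le2n_row (x y : T) : x.1 = y.1 -> le x y || le y x.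
Proof. by rewrite /le2n => ->; rewrite leqnn leq_total. Qed.

Lemma Maxs_row_unique (S : {set T}) : {in Maxs le S &, forall x y, x.1 = y.1 -> x = y}.
Proof.
move=> x y /MaxsP[xS x_max] /MaxsP[yS y_max] /le2n_row /orP[lxy|lyx].
  by rewrite (x_max _ yS lxy).
by rewrite (y_max _ xS lyx).
Qed.

Lemma Mins_row_unique (S : {set T}) : {in Mins le S &, forall x y, x.1 = y.1 -> x = y}.
Proof.
move=> x y /MinsP[xS x_min] /MinsP[yS y_min] /le2n_row /orP[lxy|lyx].
  by rewrite (y_min _ xS lxy).
by rewrite (x_min _ yS lyx).
Qed.

Section Extrema.
Variable S : {set T}.

Lemma Maxs_top_row : meets_row 1 S -> meets_row 1 (Maxs le S).
Proof.
case/meets_rowP/exists_row_max=> b [le_bn bS b_max]; apply/meets_rowP; exists b => //.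
apply/MaxsP; split=> // y; case: (ptP y) => j le_jn yS; rewrite le_pt //= => le_bj.
by apply/eqP; rewrite eq_pt //; have := b_max j le_jn yS; lia.
Qed.

Lemma Mins_bottom_row : meets_row 0 S -> meets_row 0 (Mins le S).
Proof.
case/meets_rowP/exists_row_min=> a [le_an aS a_min]; apply/meets_rowP; exists a => //.
apply/MinsP; split=> // y; case: (ptP y) => j le_jn yS; rewrite le_pt //= => le_ja.
by apply/eqP; rewrite eq_pt //; have := a_min j le_jn yS; lia.
Qed.

Lemma Maxs_bottom_row_unlinked :
  ~~ rows_linked S -> meets_row 0 S -> meets_row 0 (Maxs le S).
Proof.
move=> unlinked /meets_rowP/exists_row_max[b [le_bn bS b_max]].
apply/meets_rowP; exists b => //; apply/MaxsP; split=> // y.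
case: (ptP y) => j le_jn yS; rewrite le_pt //= => le_bj.
  by apply/eqP; rewrite eq_pt //; have := b_max j le_jn yS; lia.
by case/negP: unlinked; apply/rows_linkedP; exists b, j.
Qed.

Lemma Mins_top_row_unlinked :
  ~~ rows_linked S -> meets_row 1 S -> meets_row 1 (Mins le S).
Proof.
move=> unlinked /meets_rowP/exists_row_min[a [le_an aS a_min]].
apply/meets_rowP; exists a => //; apply/MinsP; split=> // y.
case: (ptP y) => j le_jn yS; rewrite le_pt //= => le_ja.
  by case/negP: unlinked; apply/rows_linkedP; exists j, a.
by apply/eqP; rewrite eq_pt //; have := a_min j le_jn yS; lia.
Qed.

Hypothesis icS : IC S.

Lemma Maxs_bottom_row_linked : rows_linked S -> meets_row 0 (Maxs le S) = overhang_right S.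
Proof.
case/rows_linkedP=> k [l [le_kl le_ln kS lS]]; apply/idP/idP.
  case/meets_rowP=> b le_bn /MaxsP[bS b_max].
  have neq_b j : j <= n -> b <= j -> pt 1 j \in S -> False.
    by move=> le_jn le_bj /b_max; rewrite le_pt // le_bj => /(_ isT)/eqP; rewrite eq_pt.
  have lt_lb : l < b by rewrite ltnNge; apply/negP => le_bl; apply: neq_b lS.
  apply/overhang_rightP; apply: (OverhangRight le_kl lt_lb le_bn kS lS bS).
  by apply/negP; apply: neq_b.
case/overhang_rightP=> k' l' m le_kl' lt_lm le_mn kS' lS' mS mNS.
have [b [le_bn bS b_max]] := exists_row_max (ex_intro2 _ _ m le_mn mS).
have le_mb := b_max m le_mn mS.
apply/meets_rowP; exists b => //; apply/MaxsP; split=> // y.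
case: (ptP y) => j le_jn yS; rewrite le_pt //= => le_bj.
  by apply/eqP; rewrite eq_pt //; have := b_max j le_jn yS; lia.
by case/negP: mNS; apply: (interval_closed_pt icS lS' yS); lia.
Qed.

Lemma Mins_top_row_linked : rows_linked S -> meets_row 1 (Mins le S) = overhang_left S.
Proof.
case/rows_linkedP=> k [l [le_kl le_ln kS lS]]; apply/idP/idP.
  case/meets_rowP=> a le_an /MinsP[aS a_min].
  have neq_a j : j <= a -> pt 0 j \in S -> False.
    move=> le_ja; have le_jn := leq_trans le_ja le_an.
    by move/a_min; rewrite le_pt //= le_ja => /(_ isT)/eqP; rewrite eq_pt.
  have lt_ak : a < k by rewrite ltnNge; apply/negP => le_ka; apply: neq_a kS.
  apply/overhang_leftP; apply: (OverhangLeft lt_ak le_kl le_ln aS kS lS).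
  by apply/negP; apply: neq_a.
case/overhang_leftP=> j k' l' lt_jk le_kl' le_ln' jS kS' lS' jNS.
have le_jn : j <= n by lia.
have [a [le_an aS a_min]] := exists_row_min (ex_intro2 _ _ j le_jn jS).
have le_aj := a_min j le_jn jS.
apply/meets_rowP; exists a => //; apply/MinsP; split=> // y.
case: (ptP y) => j' le_j'n yS; rewrite le_pt //= => le_j'a.
  by case/negP: jNS; apply: (interval_closed_pt icS yS kS'); lia.
by apply/eqP; rewrite eq_pt //; have := a_min j' le_j'n yS; lia.
Qed.

(* Each row holds at most one maximal and one minimal element; the rows
   that hold one differ exactly by the two overhangs. *)
Lemma card_Maxs_Mins : #|Maxs le S| + overhang_left S = #|Mins le S| + overhang_right S.
Proof.
rewrite (card_rows (@Maxs_row_unique S)) (card_rows (@Mins_row_unique S)).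
have Maxs_sub : Maxs le S \subset S by apply/subsetP => x /MaxsP[].
have Mins_sub : Mins le S \subset S by apply/subsetP => x /MinsP[].
case: (boolP (rows_linked S)) => [linked|unlinked].
  have [S0 S1] : meets_row 0 S /\ meets_row 1 S.
    case/rows_linkedP: linked => k [l [le_kl le_ln kS lS]].
    by split; apply/meets_rowP; [exists k; first lia | exists l].
  rewrite Maxs_bottom_row_linked // Mins_top_row_linked //.
  rewrite Maxs_top_row // Mins_bottom_row //.
  by case: (overhang_left S); case: (overhang_right S).
rewrite (negbTE (contra (@overhang_left_linked S) unlinked)).
rewrite (negbTE (contra (@overhang_right_linked S) unlinked)).
have -> : meets_row 0 (Maxs le S) = meets_row 0 (Mins le S).
  apply/idP/idP => /meets_row_sub => [/(_ _ Maxs_sub)|/(_ _ Mins_sub)].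
    exact: Mins_bottom_row.
  exact: Maxs_bottom_row_unlinked.
have -> // : meets_row 1 (Maxs le S) = meets_row 1 (Mins le S).
apply/idP/idP => /meets_row_sub => [/(_ _ Maxs_sub)|/(_ _ Mins_sub)].
  exact: Mins_top_row_unlinked.
exact: Maxs_top_row.
Qed.
End Extrema.

Lemma max_minus_min_rowmotion L I : linear_extension le L -> IC I ->
  max_minus_min le I = ((overhang_left (rowmotion le L I))%:R - (overhang_left I)%:R)%R.
Proof.
move=> lin_L icI; rewrite overhang_left_rowmotionE // /max_minus_min.
have := congr1 (fun k => k%:R : rat) (card_Maxs_Mins icI); rewrite /= !natrD.
by lra.
Qed.
End TwoByN.

Theorem theorem4p7 (n : nat) (L : seq (two_by_n n)) :
  (1 <= n)%N ->
  linear_extension (@le2n n) L ->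
  mesic (rowmotion (@le2n n) L) (interval_closed (@le2n n))
        (max_minus_min (@le2n n)) 0%R.
Proof.
case: n L => [//|n] L _ lin_L.
apply: (mesic_telescope (h := @overhang_left n)).
- by move=> I; apply: foldr_toggle_interval_closed.
- by move=> I J icI icJ /(congr1 (rowmotion (@le2n n.+1) (rev L))); rewrite !rowmotion_revK.
- by move=> I; apply: max_minus_min_rowmotion.
Qed.
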